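(* Let $w_1,w_2,\dots\in F$ be arbitrary, set $w_0=1$, and define $a_0=1,a_1,a_2,\dots$ by $\sum_{n\ge0}a_nz^n=\bigl(\sum_{n\ge0}w_nz^n\bigr)^{-1}$. Then \[ \sum_{L}w_L\,\mathbf r_L=\Bigl(\sum_{n\ge0}a_n\mathbf h_n\Bigr)^{-1}, \] where the sum is over all compositions $L$ (including the empty one, with $\mathbf r_\emptyset=1$) and $w_L=w_{L_1}\cdots w_{L_k}$ for $L=(L_1,\dots,L_k)$.
   Context: $F$ is a field of characteristic $0$. In $F\langle\langle X_1,X_2,\dots\rangle\rangle$ (noncommuting variables), $\mathbf h_n=\sum_{i_1\le\cdots\le i_n}X_{i_1}\cdots X_{i_n}$ ($\mathbf h_0=1$). For a composition $L=(L_1,\dots,L_k)$ of $n$, $\mathbf r_L=\sum X_{i_1}\cdots X_{i_n}$ over $(i_1,\dots,i_n)$ with $i_1\le\cdots\le i_{L_1}>i_{L_1+1}\le\cdots\le i_{L_1+L_2}>\cdots>i_{L_1+\cdots+L_{k-1}+1}\le\cdots\le i_n$. *)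

From HB Require Import structures.
From mathcomp Require Import all_boot all_order all_algebra.
Set Implicit Arguments. Unset Strict Implicit. Unset Printing Implicit Defensive.
Import Order.TTheory GRing.Theory Num.Theory.
Local Open Scope ring_scope.

(* Noncommutative formal power series over F in the variables X_0, X_1, ...
   (variable X_i of the paper is our letter i-1; only the order of the
   letters matters).  A word X_{i1}...X_{in} is the sequence [:: i1; ...; in];
   a series is its coefficient function on words. *)
Definition ncs (F : Type) := seq nat -> F.

Definition ncone (F : nzRingType) : ncs F := fun u => (u == [::])%:R.

Definition ncmul (F : nzRingType) (f g : ncs F) : ncs F :=
  fun u => \sum_(i < (size u).+1) f (take i u) * g (drop i u).

Definition hser (F : nzRingType) (n : nat) : ncs F :=
  fun u => ((size u == n) && sorted leq u)%:R.

Definition partsums (L : seq nat) : seq nat :=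
  [seq sumn (take i L) | i <- iota 1 (size L).-1].

(* r_L : sum of words of length |L| with weak ascents inside blocks
   and strict descents exactly at the block boundaries. *)
Definition rser (F : nzRingType) (L : seq nat) : ncs F :=
  fun u => ((size u == sumn L) &&
     [forall j : 'I_(size u),
        (0 < j)%N ==>
        (if (j : nat) \in partsums L then (nth 0%N u j < nth 0%N u j.-1)%N
         else (nth 0%N u j.-1 <= nth 0%N u j)%N)])%:R.

Definition is_composition (n : nat) (L : seq nat) : bool :=
  (sumn L == n) && all (fun x => 0 < x)%N L.

Fixpoint seqs_upto (k n : nat) : seq (seq nat) :=
  match k with
  | 0 => [:: [::]]
  | k'.+1 => [::] :: [seq x :: s | x <- iota 0 n.+1, s <- seqs_upto k' n]
  end.

Definition compositions (n : nat) : seq (seq nat) :=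
  undup [seq L <- seqs_upto n n | is_composition n L].

Definition wL (F : nzRingType) (w : nat -> F) (L : seq nat) : F :=
  \prod_(x <- L) w x.

(* sum_L w_L r_L over all compositions L; on a word u only the compositions
   of size u contribute, since r_L has coefficient 0 on u otherwise. *)
Definition sum_wr (F : nzRingType) (w : nat -> F) : ncs F :=
  fun u => \sum_(L <- compositions (size u)) wL w L * rser F L u.

(* sum_n a_n h_n; on u only n = size u contributes. *)
Definition sum_ah (F : nzRingType) (a : nat -> F) : ncs F :=
  fun u => \sum_(n < (size u).+1) a n * hser F n u.

From HB Require Import structures.
From mathcomp Require Import all_boot all_order all_algebra.
From mathcomp Require Import zify.
From Stdlib Require Import FunctionalExtensionality.
Import GRing.Theory.
Local Open Scope ring_scope.

(* Every word u lies in exactly one r_L, namely for its descent composition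
   L = D(u), the lengths of the maximal weakly increasing runs of u; so the
   coefficient of u in sum_L w_L r_L is w_{D(u)}, while that of u in
   sum_n a_n h_n is a_{|u|} if u is weakly increasing and 0 otherwise.
   In the Cauchy product the only factorisations u = u' u'' that contribute
   are those with u'' a suffix of the last run of u, of length m say.  If
   D(u) = (L, m) and |u''| = m - j, then D(u') = (L, j) (with j = 0 dropped),
   so the coefficient of u is w_L sum_j w_j a_{m-j}, which vanishes for u
   nonempty.  The product in the other order is symmetric, using the first
   run. *)

Definition incr_head (L : seq nat) : seq nat :=
  if L is k :: L' then k.+1 :: L' else [:: 1%N].

Fixpoint incr_last (L : seq nat) : seq nat :=
  match L with
  | [::] => [:: 1%N]
  | k :: L' => if L' is [::] then [:: k.+1] else k :: incr_last L'
  end.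

Fixpoint descent_comp (u : seq nat) : seq nat :=
  match u with
  | [::] => [::]
  | x :: s => match s with
              | [::] => [:: 1%N]
              | y :: _ => if (y < x)%N then 1%N :: descent_comp s
                          else incr_head (descent_comp s)
              end
  end.

Lemma descent_comp_cons2 x y s : descent_comp [:: x, y & s] =
  if (y < x)%N then 1%N :: descent_comp (y :: s)
  else incr_head (descent_comp (y :: s)).
Proof. by []. Qed.

Lemma descent_comp_eq_cons (u : seq nat) :
  u != [::] -> exists m L, descent_comp u = m :: L.
Proof.
case: u => [|x [|y s]] // _; first by exists 1%N, [::].
rewrite descent_comp_cons2; case: ifP => _; first by exists 1%N, (descent_comp (y :: s)).
case: (descent_comp (y :: s)) => [|k L] /=; first by exists 1%N, [::].
by exists k.+1, L.
Qed.

Lemma descent_comp_composition u : is_composition (size u) (descent_comp u).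
Proof.
elim: u => [|x [|y s] IH] //.
move: IH; rewrite /is_composition descent_comp_cons2.
case: (descent_comp (y :: s)) => [|k L] /andP[/eqP Hs Hp]; case: ifP => _ /=.
- by move: Hs.
- by move: Hs.
- by move: Hs Hp => /= -> ->; rewrite add1n eqxx.
- by move: Hs Hp => /= <- /andP[_ ->]; rewrite addSn eqxx.
Qed.

Lemma incr_last_rcons L k : incr_last (rcons L k) = rcons L k.+1.
Proof. by elim: L => [|a L IH] //=; case: L IH => [|b L] //= ->. Qed.

Lemma descent_comp_rcons (u : seq nat) (z : nat) : u != [::] ->
  descent_comp (rcons u z) =
  if (z < last 0%N u)%N then rcons (descent_comp u) 1%N
  else incr_last (descent_comp u).
Proof.
case: u => [|x s] // _.
elim: s x => [|y s IH] x; first by rewrite /=; case: ifP.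
rewrite (_ : rcons [:: x, y & s] z = [:: x, y & rcons s z]) //.
rewrite !descent_comp_cons2 -rcons_cons IH.
rewrite (_ : last 0%N [:: x, y & s] = last 0%N (y :: s)) //.
have [m [L ->]] := descent_comp_eq_cons (y :: s) isT.
by case: ifP => _; case: ifP => _ //=; case: L.
Qed.

Lemma sorted_rcons_leq (p : seq nat) z : (last 0%N p <= z)%N ->
  sorted leq (rcons p z) = sorted leq p.
Proof. by case: p => [|a p] //= H; rewrite rcons_path H andbT. Qed.

Lemma sorted_rcons_ltn (p : seq nat) z : p != [::] -> (z < last 0%N p)%N ->
  sorted leq (rcons p z) = false.
Proof. by case: p => [|a p] //= _ H; rewrite rcons_path leqNgt H andbF. Qed.

Lemma last_drop (u : seq nat) i :
  (i < size u)%N -> last 0%N (drop i u) = last 0%N u.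
Proof. by move=> Hi; rewrite -!nth_last nth_drop size_drop; congr nth; lia. Qed.

Lemma drop_rcons_oversize (u : seq nat) z i :
  (size u <= i)%N -> drop i (rcons u z) = if i == size u then [:: z] else [::].
Proof.
move=> Hi; case: eqVneq => [->|Hne]; first by rewrite drop_rcons // drop_size.
by rewrite drop_oversize // size_rcons ltn_neqAle eq_sym Hne Hi.
Qed.

Lemma descent_comp_last_run (u : seq nat) : u != [::] ->
  exists L m, descent_comp u = rcons L m /\ (m <= size u)%N /\
  (forall i, (i <= size u)%N -> sorted leq (drop i u) = (size u - m <= i)%N) /\
  (forall i, (size u - m <= i <= size u)%N ->
     descent_comp (take i u) =
     if i == (size u - m)%N then L else rcons L (i - (size u - m))%N).
Proof.
elim/last_ind: u => [|u z IH] // _.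
have [->|Hu] := eqVneq u [::].
  exists [::], 1%N; do !split => //; first by case.
  by case=> [|[|i]].
have {IH} [L [m [HD [Hm [Hs Ht]]]]] := IH Hu.
have Hsz : (0 < size u)%N by rewrite lt0n size_eq0.
rewrite descent_comp_rcons // size_rcons; case: ifP => Hz.
  exists (descent_comp u), 1%N; do !split => //; rewrite subn1 /=.
    move=> i Hi; have [Hi'|Hi'] := ltnP i (size u).
      rewrite drop_rcons ?(ltnW Hi') // sorted_rcons_ltn ?last_drop //.
      by rewrite -size_eq0 size_drop subn_eq0 -ltnNge.
    by rewrite drop_rcons_oversize //; case: eqP.
  move=> i /andP[H1 H2]; have [->|Hne] := eqVneq i (size u).
    by rewrite -cats1 takel_cat // take_size.
  have -> : i = (size u).+1 by lia.
  by rewrite take_oversize ?size_rcons // descent_comp_rcons // Hz subSnn.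
exists L, m.+1; rewrite HD incr_last_rcons; do !split => //.
  move=> i Hi; rewrite subSS; have [Hi'|Hi'] := ltnP i (size u).
    rewrite drop_rcons ?(ltnW Hi') // sorted_rcons_leq ?Hs ?(ltnW Hi') //.
    by rewrite last_drop // leqNgt Hz.
  by rewrite drop_rcons_oversize //; case: eqP => _ /=; lia.
move=> i; rewrite subSS => /andP[H1 H2]; have [Hi'|Hi'] := leqP i (size u).
  by rewrite -cats1 takel_cat // Ht //; apply/andP.
have -> : i = (size u).+1 by lia.
rewrite take_oversize ?size_rcons // descent_comp_rcons // Hz HD incr_last_rcons.
by rewrite ifN; [congr rcons|]; lia.
Qed.

Lemma descent_comp_first_run (u : seq nat) : u != [::] ->
  exists m L, descent_comp u = m :: L /\ (m <= size u)%N /\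
  (forall i, (i <= size u)%N -> sorted leq (take i u) = (i <= m)%N) /\
  (forall i, (i <= m)%N ->
     descent_comp (drop i u) = if i == m then L else (m - i)%N :: L).
Proof.
elim: u => [|x [|y s] IH] // _.
  by exists 1%N, [::]; do !split => //; case=> [|[|i]].
have {IH} [m [L [HD [Hm [Hs Ht]]]]] := IH isT.
rewrite descent_comp_cons2 HD; case: ifP => Hyx.
  exists 1%N, (m :: L); do !split => //; case=> [|[|i]] // _.
  - by rewrite /= leqNgt Hyx.
  - by rewrite drop0 descent_comp_cons2 Hyx HD.
exists m.+1, L; do !split => //.
  case=> [|[|j]] // Hj; rewrite ltnS -Hs; last by move: Hj => /=; lia.
  by rewrite /= leqNgt Hyx.
case=> [|j] Hj; first by rewrite drop0 descent_comp_cons2 Hyx HD subn0.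
by rewrite [drop _ _]/= Ht // subSS.
Qed.

Definition descents_at_partsums (L u : seq nat) : bool :=
  all (fun j => (j.+1 \in partsums L) == (nth 0%N u j.+1 < nth 0%N u j)%N)
      (iota 0 (size u).-1).

Lemma rserE (F : nzRingType) (L u : seq nat) :
  rser F L u = ((size u == sumn L) && descents_at_partsums L u)%:R.
Proof.
rewrite /rser /descents_at_partsums; congr (_ %:R); congr (_ && _).
apply/forallP/allP.
  move=> H j; rewrite mem_iota add0n => /andP[_ Hj].
  have Hj' : (j.+1 < size u)%N by lia.
  move: (H (Ordinal Hj')) => /=.
  case: (j.+1 \in partsums L) => /=; first by move=> ->.
  by rewrite leqNgt; case: (_ < _)%N.
move=> H [[|j] Hj] //=.
move: (H j); rewrite mem_iota add0n => /(_ (ltac:(apply/andP; split; lia))).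
case: (j.+1 \in partsums L) => /=; first by move/eqP <-.
by move=> /eqP H'; rewrite leqNgt -H'.
Qed.

Lemma mem_partsums_cons (k : nat) (L : seq nat) (j : nat) :
  (j \in partsums (k :: L)) =
  has (fun i => j == k + sumn (take i L))%N (iota 0 (size L)).
Proof.
rewrite /partsums /= -[1%N]/(1 + 0)%N iotaDl -map_comp.
by apply/mapP/hasP => [[i Hi ->]|[i Hi /eqP ->]]; exists i.
Qed.

Lemma one_in_partsums (k : nat) (L : seq nat) : (0 < k)%N ->
  (k == 1%N -> L != [::]) -> (1%N \in partsums (k :: L)) = (k == 1%N).
Proof.
move=> Hk HL; rewrite mem_partsums_cons.
have [E|E] := eqVneq k 1%N.
  by move: (HL (introT eqP E)); rewrite E; case: L {HL}.
by apply/hasP => [[i _ /eqP]]; move/eqP: E; lia.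
Qed.

Lemma mem_partsums_behead (k : nat) (L : seq nat) (j : nat) : (0 < k)%N ->
  (j.+2 \in partsums (k :: L)) =
  (j.+1 \in partsums (if k == 1%N then L else k.-1 :: L)).
Proof.
move=> Hk; have [E|E] := eqVneq k 1%N.
  rewrite mem_partsums_cons E; case: L => [|a L] //.
  rewrite mem_partsums_cons /= -[1%N]/(1 + 0)%N iotaDl has_map.
  by apply/eq_has => i /=; rewrite add1n add0n; apply/eqP/eqP; lia.
rewrite !mem_partsums_cons; apply/eq_has => i /=.
by apply/eqP/eqP; move/eqP: E; lia.
Qed.

Lemma descents_at_partsums_cons2 x y s (k : nat) (L : seq nat) : (0 < k)%N ->
  (k == 1%N -> L != [::]) ->
  descents_at_partsums (k :: L) [:: x, y & s] =
  ((k == 1%N) == (y < x)%N) &&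
  descents_at_partsums (if k == 1%N then L else k.-1 :: L) (y :: s).
Proof.
move=> Hk HL; rewrite /descents_at_partsums /= one_in_partsums //.
congr (_ && _); rewrite -[1%N]/(1 + 0)%N iotaDl all_map.
by apply/eq_all => j /=; rewrite add1n mem_partsums_behead.
Qed.

Lemma composition0 (L : seq nat) : is_composition 0 L -> L = [::].
Proof. by case: L => [|a L] // /andP[/= ? /andP[? _]]; lia. Qed.

Lemma rser_descent_comp (F : nzRingType) (L u : seq nat) :
  is_composition (size u) L -> rser F L u = (L == descent_comp u)%:R.
Proof.
move=> HuL; rewrite rserE; congr (nat_of_bool _)%:R; move: HuL.
elim: u L => [|x s IH] L; first by move/composition0 ->.
case: L => [|k L] // /andP[/eqP Hsum /andP[Hk HL]].
have {}HL : all (fun x => 0 < x)%N L := HL.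
case: s IH Hsum => [|y s] IH Hsum.
  move: Hsum => /= Hsum; have Hk1 : k = 1%N by lia.
  have -> : L = [::] by apply: composition0; apply/andP; split => //; lia.
  by rewrite Hk1.
rewrite [sumn _]/= [size _]/= in Hsum.
have HL1 : k == 1%N -> L != [::].
  by move=> /eqP Ek; apply/eqP => EL; move: Hsum; rewrite Ek EL.
rewrite descents_at_partsums_cons2 // (_ : (_ == _) = true); last exact/eqP.
set L' := if k == 1%N then L else k.-1 :: L.
have HL' : is_composition (size (y :: s)) L'.
  rewrite /is_composition /L'; have [Ek|Ek] := eqVneq k 1%N; rewrite /= HL andbT.
    by apply/eqP; lia.
  by apply/andP; split; [apply/eqP|]; lia.
move: (IH L' HL'); rewrite (_ : (_ == sumn L') = true); last first.
  by rewrite eq_sym; case/andP: HL'.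
rewrite andTb => ->; rewrite descent_comp_cons2.
have := descent_comp_composition (y :: s).
have [m [M ->]] := descent_comp_eq_cons (y :: s) isT.
move=> /andP[_ /= /andP[Hm _]].
rewrite /L'; have [->|Ek] := eqVneq k 1%N.
  by case: (y < x)%N; rewrite /= ?eqseq_cons ?eqxx //; case: m Hm.
case: (y < x)%N; rewrite /= !eqseq_cons ?(negbTE Ek) //.
by congr (_ && _); apply/eqP/eqP; move/eqP: Ek; lia.
Qed.

Lemma mem_seqs_upto k n (L : seq nat) : (size L <= k)%N ->
  all (fun x => x <= n)%N L -> L \in seqs_upto k n.
Proof.
elim: k L => [|k IH] [|x L] // Hs /andP[Hx HL].
rewrite [seqs_upto _ _]/seqs_upto -/seqs_upto in_cons; apply/orP; right.
apply/allpairsP; exists (x, L); split => //.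
  by rewrite mem_iota add0n ltnS Hx.
exact: IH.
Qed.

Lemma mem_compositions n (L : seq nat) : is_composition n L -> L \in compositions n.
Proof.
move=> H; rewrite /compositions mem_undup mem_filter H /=.
move: H => /andP[/eqP <- Hp]; apply: mem_seqs_upto.
  by elim: L Hp => [|a L IH] //= /andP[Ha /IH]; lia.
by elim: L {Hp} => [|a L IH] //=; rewrite leq_addr; apply: sub_all IH => x /=; lia.
Qed.

Lemma sum_wrE (F : nzRingType) (w : nat -> F) (u : seq nat) :
  sum_wr w u = wL w (descent_comp u).
Proof.
have HD := descent_comp_composition u.
rewrite /sum_wr (bigD1_seq (descent_comp u)) /=; last exact: undup_uniq.
  rewrite rser_descent_comp // eqxx mulr1 big1_seq ?addr0 // => L /andP[HL].
  rewrite mem_undup mem_filter => /andP[Hc _].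
  by rewrite rser_descent_comp // (negbTE HL) mulr0.
exact: mem_compositions.
Qed.

Lemma sum_ahE (F : nzRingType) (a : nat -> F) (v : seq nat) :
  sum_ah a v = a (size v) * (sorted leq v)%:R.
Proof.
rewrite /sum_ah big_ord_recr /= big1 ?add0r; first by rewrite /hser eqxx.
by move=> i _; rewrite /hser eqn_leq leqNgt ltn_ord mulr0.
Qed.

Lemma wL_rcons (F : nzRingType) (w : nat -> F) k L :
  wL w (rcons L k) = wL w L * w k.
Proof. by rewrite /wL -cats1 big_cat big_seq1. Qed.

Section Inverse.

Variables (R : nzRingType) (w a : nat -> R).
Hypothesis w0 : w 0%N = 1.

Lemma sum_wr_mul_sum_ah :
  (forall n, \sum_(k < n.+1) w k * a (n - k)%N = (n == 0%N)%:R) ->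
  ncmul (sum_wr w) (sum_ah a) = ncone R.
Proof.
move=> wa; apply: functional_extensionality => u; rewrite /ncmul /ncone.
have [->|Hu] := eqVneq u [::].
  by move: (wa 0%N); rewrite !big_ord1 sum_wrE sum_ahE /wL big_nil w0 !mul1r mulr1.
have [L [m [HD [Hm [Hs Ht]]]]] := descent_comp_last_run u Hu.
have Hm0 : (0 < m)%N.
  by move: (descent_comp_composition u); rewrite HD /is_composition all_rcons => /and3P[].
under eq_bigr => i _ do rewrite sum_wrE sum_ahE.
rewrite (_ : (size u).+1 = (size u - m) + m.+1)%N; last by lia.
rewrite big_split_ord /= big1 ?add0r => [|[i Hi] _]; last first.
  by rewrite /= Hs; [rewrite leqNgt Hi mulr0n !mulr0 | lia].
rewrite (eq_bigr (fun j : 'I_m.+1 => wL w L * (w j * a (m - j)%N))).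
  by rewrite -mulr_sumr wa; case: m Hm0 {Hm Hs Ht HD} => // m _; rewrite mulr0.
move=> [j Hj] _ /=; rewrite Ht ?Hs; try lia.
rewrite leq_addr mulr1n mulr1 size_drop (_ : size u - (size u - m + j) = m - j)%N; last by lia.
case: j Hj => [|j] Hj; first by rewrite addn0 eqxx w0 mul1r.
by rewrite ifN ?addKn ?wL_rcons ?mulrA //; lia.
Qed.

Lemma sum_ah_mul_sum_wr :
  (forall n, \sum_(k < n.+1) a k * w (n - k)%N = (n == 0%N)%:R) ->
  ncmul (sum_ah a) (sum_wr w) = ncone R.
Proof.
move=> aw; apply: functional_extensionality => u; rewrite /ncmul /ncone.
have [->|Hu] := eqVneq u [::].
  by move: (aw 0%N); rewrite !big_ord1 sum_wrE sum_ahE /wL big_nil w0 !mulr1.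
have [m [L [HD [Hm [Hs Ht]]]]] := descent_comp_first_run u Hu.
have Hm0 : (0 < m)%N.
  by move: (descent_comp_composition u); rewrite HD /is_composition => /and3P[].
under eq_bigr => i _ do rewrite sum_wrE sum_ahE.
rewrite (_ : (size u).+1 = m.+1 + (size u - m))%N; last by lia.
rewrite big_split_ord /= [X in _ + X]big1 ?addr0 => [|[i Hi] _]; last first.
  have Hlt : (m.+1 + i <= m)%N = false by lia.
  by rewrite /= Hs ?Hlt ?mulr0n ?mulr0 ?mul0r //; lia.
rewrite (eq_bigr (fun j : 'I_m.+1 => a j * w (m - j)%N * wL w L)).
  by rewrite -mulr_suml aw; case: m Hm0 {Hm Hs Ht HD} => // m _; rewrite mul0r.
move=> [j Hj] _ /=; rewrite Ht ?Hs; try lia.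
rewrite -(ltnS j m) Hj mulr1n mulr1 size_takel; last by lia.
have [->|Hjm] := eqVneq j m; first by rewrite subnn w0 mulr1.
by rewrite /wL big_cons mulrA.
Qed.

End Inverse.

Lemma convolutionC (R : comNzRingType) (f g : nat -> R) n :
  \sum_(k < n.+1) f k * g (n - k)%N = \sum_(k < n.+1) g k * f (n - k)%N.
Proof.
rewrite (reindex_inj rev_ord_inj); apply: eq_bigr => -[k Hk] _ /=.
by rewrite mulrC subSS subKn.
Qed.

Theorem theorem11 (F : fieldType) (charF0 : [pchar F] =i pred0)
  (w a : nat -> F) (hw0 : w 0%N = 1)
  (ha : forall n : nat,
     \sum_(k < n.+1) w k * a (n - k)%N = (n == 0%N)%:R) :
  ncmul (sum_wr w) (sum_ah a) = ncone F /\
  ncmul (sum_ah a) (sum_wr w) = ncone F.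
Proof.
split; first exact: sum_wr_mul_sum_ah.
by apply: sum_ah_mul_sum_wr => // n; rewrite convolutionC.
Qed.
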